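(* Let $N\ge1$. Disregarding height assignments, any two $N$-cube Adinkras are isomorphic; i.e. there is a bijection between their vertex sets preserving adjacency, edge colors and the boson/fermion bipartition which, after switching a suitable set of vertices, also preserves edge parities.
   Context: An Adinkra of dimension $N$ is a finite connected simple graph $G=(V,E)$ together with: (1) a bipartition of $V$ into bosons and fermions such that every edge joins a boson and a fermion; (2) a height function $\mathrm{hgt}:V\to\mathbb{Z}$ with $|\mathrm{hgt}(u)-\mathrm{hgt}(v)|=1$ for every edge $uv$; (3) a coloring of $E$ by colors $\{1,\dots,N\}$ such that each vertex is incident to exactly one edge of each color; (4) an edge parity $\pi:E\to\mathbb{Z}_2$ (edges of parity $1$ are called dashed). These must satisfy: every path with edge colors $(i,j)$, $i\neq j$, lies in a unique 4-cycle with colors $(i,j,i,j)$, and every such two-colored 4-cycle has an odd number of dashed edges. An $N$-cube Adinkra is an Adinkra of dimension $N$ with $2^N$ vertices (its underlying graph is the $N$-dimensional hypercube). Switching a vertex reverses the parity of all edges incident to it. *)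

From mathcomp Require Import all_boot all_order all_algebra.
Set Implicit Arguments.
Unset Strict Implicit.
Unset Printing Implicit Defensive.

(* Colours {1,...,N} are represented by 'I_N.
   Edge data (colour, parity) are given as functions on ordered pairs of
   vertices, required to be symmetric on edges; their values on non-edges are
   irrelevant. *)
Record adinkra_data (N : nat) (V : finType) := AdinkraData {
  adj : rel V;
  boson : pred V;           (* bosons; fermions are the complement *)
  hgt : V -> int;
  col : V -> V -> 'I_N;
  dashed : V -> V -> bool   (* parity of the edge uv (true = dashed = 1) *)
}.

Definition is_adinkra (N : nat) (V : finType) (A : adinkra_data N V) : Prop :=
  let adj := adj A in let col := col A in let dashed := dashed A in
  [/\
      (forall u, ~~ adj u u),
      (forall u v, adj u v = adj v u),
      (forall u v, fingraph.connect adj u v)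
    &
      (forall u v, adj u v -> col u v = col v u /\ dashed u v = dashed v u)] /\
  [/\
      (forall u v, adj u v -> boson A u != boson A v),
      (forall u v, adj u v -> absz (hgt A u - hgt A v)%R = 1%N),
      (forall (v : V) (i : 'I_N), #|[set u | adj v u && (col v u == i)]| = 1%N),
      (forall u v w, adj u v -> adj v w -> col u v != col v w ->
         exists! x, [/\ adj w x, col w x = col u v, adj x u & col x u = col v w])
    &
      (forall u v w x, adj u v -> adj v w -> adj w x -> adj x u ->
         col u v != col v w -> col w x = col u v -> col x u = col v w ->
         dashed u v (+) dashed v w (+) dashed w x (+) dashed x u)].

Definition is_cube_adinkra (N : nat) (V : finType) (A : adinkra_data N V) : Prop :=
  is_adinkra A /\ #|V| = (2 ^ N)%N.

(* Parity of the edge uv after switching every vertex of S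
   (each switched endpoint reverses the parity). *)
Definition switched_dashed (N : nat) (V : finType) (A : adinkra_data N V)
  (S : {set V}) (u v : V) : bool :=
  dashed A u v (+) (u \in S) (+) (v \in S).

Definition adinkra_iso_up_to_switching (N : nat) (V1 V2 : finType)
  (A1 : adinkra_data N V1) (A2 : adinkra_data N V2) : Prop :=
  exists f : V1 -> V2,
  [/\ bijective f,
      (forall u v, adj A2 (f u) (f v) = adj A1 u v),
      (forall u v, adj A1 u v -> col A2 (f u) (f v) = col A1 u v),
      (forall u, boson A2 (f u) = boson A1 u)
    & exists S : {set V1},
        forall u v, adj A1 u v ->
          dashed A2 (f u) (f v) = switched_dashed A1 S u v].

From Pilot Require Import Defs.
From mathcomp Require Import all_boot all_order all_algebra.
Set Implicit Arguments.
Unset Strict Implicit.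
Unset Printing Implicit Defensive.

(* In an Adinkra the colour-i neighbour maps [nbr _ i] are commuting involutions
   (this is the two-coloured 4-cycle axiom), so in an N-cube Adinkra the walk from
   a base vertex along the colours of [s : {set 'I_N}] identifies the vertices with
   the subsets of colours, i.e. with the N-cube.  Hence two N-cube Adinkras whose
   base points are both bosons or both fermions (moving the second base point along
   one edge if needed, whence N >= 1) are related by a bijection commuting with
   every [nbr _ i]; it preserves adjacency, colours and the bipartition.
   Edge by edge, the two parities differ by a Z/2-valued 1-cochain on the cube
   which sums to zero around every square, both Adinkras having an odd number of
   dashed edges there.  The cube being simply connected, this cochain is the
   coboundary of a potential g, and switching the vertices where g holds makes
   the parities agree. *)

Definition toggle (T : finType) (s : {set T}) (i : T) : {set T} :=
  if i \in s then s :\ i else i |: s.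

Lemma in_toggle (T : finType) (s : {set T}) i j :
  (j \in toggle s i) = (j == i) (+) (j \in s).
Proof.
by rewrite /toggle; case: ifP => si; rewrite !inE; case: eqP => [->|] //=; rewrite si.
Qed.

Lemma toggleK (T : finType) (s : {set T}) i : toggle (toggle s i) i = s.
Proof. by apply/setP => j; rewrite !in_toggle addbA addbb. Qed.

Lemma toggleC (T : finType) (s : {set T}) i j :
  toggle (toggle s i) j = toggle (toggle s j) i.
Proof. by apply/setP => k; rewrite !in_toggle addbCA. Qed.

Lemma restrict_toggle (T : finType) (s : {set T}) (l : seq T) i :
  [set x in toggle s i | x \in l] =
  if i \in l then toggle [set x in s | x \in l] i else [set x in s | x \in l].
Proof.
apply/setP => x; case: ifP => il; rewrite !(inE, in_toggle).
  by case: eqP => [-> | _] //=; rewrite il !andbT.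
by case: eqP => [-> | _] //=; rewrite il !andbF.
Qed.

Lemma restrict_cons (T : finType) (s : {set T}) (l : seq T) j : j \notin l ->
  [set x in s | x \in j :: l] =
  if j \in s then toggle [set x in s | x \in l] j else [set x in s | x \in l].
Proof.
move=> jNl; apply/setP => x; case: ifP => js; rewrite !(inE, in_toggle).
  by case: eqP => [-> | _] //=; rewrite js (negbTE jNl).
by case: eqP => [-> | _] //=; rewrite js.
Qed.

Section ClosedCochainExact.
Variables (T : finType) (e : {set T} -> T -> bool).
Hypothesis e_toggle : forall s i, e (toggle s i) i = e s i.
Hypothesis e_square : forall s i j, i != j ->
  e s i (+) e (toggle s i) j = e s j (+) e (toggle s j) i.

(* The sum of [e] along the monotone path from [set0] to [s :&: l] that adds the
   elements of [l] from last to first. *)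
Fixpoint potential (l : seq T) (s : {set T}) : bool :=
  if l is j :: l' then potential l' s (+) (j \in s) && e [set x in s | x \in l'] j
  else false.

Lemma eq_potential l (s t : {set T}) :
  {in l, s =i t} -> potential l s = potential l t.
Proof.
elim: l => //= j l IHl st.
have st' : {in l, s =i t} by move=> x xl; apply: st; rewrite inE xl orbT.
rewrite IHl // st ?mem_head //.
have -> // : [set x in s | x \in l] = [set x in t | x \in l].
by apply/setP => x; rewrite !inE; case xl: (x \in l); rewrite ?andbF ?andbT ?(st' x xl).
Qed.

Lemma potential_toggle l (s : {set T}) i : uniq l -> i \in l ->
  potential l (toggle s i) = potential l s (+) e [set x in s | x \in l] i.
Proof.
elim: l => //= j l IHl /andP[jNl ul]; rewrite inE restrict_cons // => /predU1P[ij|il].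
  subst i; rewrite restrict_toggle (negbTE jNl) in_toggle eqxx.
  have -> : potential l (toggle s j) = potential l s.
    by apply: eq_potential => x xl; rewrite in_toggle; case: eqP xl jNl => // -> ->.
  by case: (j \in s) => /=; rewrite ?e_toggle ?addbF ?addbK.
have ij : i != j by apply: contraNneq jNl => <-.
rewrite IHl // restrict_toggle il in_toggle eq_sym (negbTE ij) /=.
by case: (j \in s) => /=; rewrite ?addbF // -!addbA e_square.
Qed.

Lemma closed_cochain_exact :
  exists g : {set T} -> bool, forall s i, g (toggle s i) = g s (+) e s i.
Proof.
exists (potential (enum T)) => s i; rewrite potential_toggle ?enum_uniq ?mem_enum //.
by congr (_ (+) e _ _); apply/setP => x; rewrite inE mem_enum andbT.
Qed.

End ClosedCochainExact.

Section Adinkra.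
Variables (N : nat) (V : finType) (A : adinkra_data N V).
Hypothesis adinkraA : is_adinkra A.

Local Notation adj := (adj A).
Local Notation col := (Defs.col A).
Local Notation dashed := (dashed A).
Local Notation boson := (boson A).

Lemma adj_sym u v : adj u v = adj v u.
Proof. by case: adinkraA => [[]]. Qed.

Lemma adj_connect u v : fingraph.connect adj u v.
Proof. by case: adinkraA => [[]]. Qed.

Lemma col_sym u v : adj u v -> col u v = col v u.
Proof. by case: adinkraA => [[_ _ _ edge] _] /edge[]. Qed.

Lemma dashed_sym u v : adj u v -> dashed u v = dashed v u.
Proof. by case: adinkraA => [[_ _ _ edge] _] /edge[]. Qed.

Lemma boson_adj u v : adj u v -> boson v = ~~ boson u.
Proof.
by case: adinkraA => [_ [bip _ _ _ _]] /bip; case: (boson u); case: (boson v).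
Qed.

Definition nbr (v : V) (i : 'I_N) : V :=
  odflt v [pick u | adj v u && (col v u == i)].

Lemma nbr_spec v i : adj v (nbr v i) /\ col v (nbr v i) = i.
Proof.
case: adinkraA => [_ [_ _ card1 _ _]].
rewrite /nbr; case: pickP => [u /andP[vu /eqP] // | none].
by have := card1 v i; rewrite (eq_card0 (A := [set u | _])) // => u; rewrite inE none.
Qed.

Lemma adj_nbr v i : adj v (nbr v i). Proof. by case: (nbr_spec v i). Qed.
Lemma col_nbr v i : col v (nbr v i) = i. Proof. by case: (nbr_spec v i). Qed.

Lemma nbr_eq v u : adj v u -> u = nbr v (col v u).
Proof.
case: adinkraA => [_ [_ _ card1 _ _]] vu.
have /eqP/cards1P[x Ex] := card1 v (col v u).
have : u \in [set w | adj v w && (col v w == col v u)] by rewrite inE vu eqxx.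
have : nbr v (col v u) \in [set w | adj v w && (col v w == col v u)].
  by rewrite inE adj_nbr col_nbr eqxx.
by rewrite Ex !inE => /eqP-> /eqP->.
Qed.

Lemma nbrK i : involutive (nbr^~ i).
Proof.
move=> v; have vw := adj_nbr v i; rewrite adj_sym in vw.
by rewrite [RHS](nbr_eq vw) -(col_sym (adj_nbr v i)) col_nbr.
Qed.

Lemma nbrC v i j : nbr (nbr v i) j = nbr (nbr v j) i.
Proof.
case: (eqVneq i j) => [-> // | ij].
case: adinkraA => [_ [_ _ _ square _]].
have wv : adj (nbr v i) v by rewrite adj_sym adj_nbr.
have col_wv : col (nbr v i) v = i by rewrite -(col_sym (adj_nbr v i)) col_nbr.
have ij' : col (nbr v i) v != col v (nbr v j) by rewrite col_wv col_nbr.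
have [x [[xw cx xu cu] _]] := square _ _ _ wv (adj_nbr v j) ij'.
rewrite col_wv in cx; rewrite col_nbr in cu; rewrite adj_sym in xu.
have -> : nbr (nbr v j) i = x by rewrite -cx -(nbr_eq xw).
by rewrite [RHS](nbr_eq xu) (col_sym xu) cu.
Qed.

Lemma adj_nbrE v u : adj v u = [exists i, u == nbr v i].
Proof.
apply/idP/existsP => [vu | [i /eqP->]]; last exact: adj_nbr.
by exists (col v u); rewrite -nbr_eq.
Qed.

Lemma boson_nbr v i : boson (nbr v i) = ~~ boson v.
Proof. exact/boson_adj/adj_nbr. Qed.

Lemma nbr_ind (P : V -> Prop) v0 :
  P v0 -> (forall v i, P v -> P (nbr v i)) -> forall v, P v.
Proof.
move=> P0 Pnbr v; have /connectP[p] := adj_connect v0 v.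
elim: p v0 P0 => [|w p IHp] u Pu /= => [_ -> // | /andP[uw wp] v_last].
by apply: (IHp w _ wp v_last); rewrite (nbr_eq uw); apply: Pnbr.
Qed.

Definition dash v i := dashed v (nbr v i).

Lemma dash_nbr v i : dash (nbr v i) i = dash v i.
Proof. by rewrite /dash nbrK dashed_sym // adj_sym adj_nbr. Qed.

Lemma dash_square v i j : i != j ->
  dash v i (+) dash (nbr v i) j (+) dash (nbr v j) i (+) dash v j.
Proof.
case: adinkraA => [_ [_ _ _ _ odd_square]] ij.
have xw : adj (nbr v j) (nbr (nbr v i) j) by rewrite nbrC adj_nbr.
rewrite /dash [nbr (nbr v j) i]nbrC (dashed_sym xw) (dashed_sym (adj_nbr v j)).
apply: odd_square; rewrite ?adj_nbr ?col_nbr //.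
- by rewrite adj_sym.
- by rewrite adj_sym adj_nbr.
- by rewrite -(col_sym xw) nbrC col_nbr.
- by rewrite -(col_sym (adj_nbr v j)) col_nbr.
Qed.

Definition walk (s : {set 'I_N}) (l : seq 'I_N) (v : V) : V :=
  foldr (fun j w => if j \in s then nbr w j else w) v l.

Lemma walk_toggle s l v i : uniq l ->
  walk (toggle s i) l v = if i \in l then nbr (walk s l v) i else walk s l v.
Proof.
elim: l => //= j l IHl /andP[jNl ul]; rewrite IHl // in_toggle inE.
case: (eqVneq j i) => [<- | _] /=; first by rewrite (negbTE jNl); case: (j \in s); rewrite ?nbrK.
by case: (i \in l); case: (j \in s); rewrite // nbrC.
Qed.

Definition coord (v0 : V) (s : {set 'I_N}) : V := walk s (enum 'I_N) v0.

Lemma coord_set0 v0 : coord v0 set0 = v0.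
Proof. by rewrite /coord; elim: (enum 'I_N) => //= j l ->; rewrite inE. Qed.

Lemma coord_toggle v0 s i : coord v0 (toggle s i) = nbr (coord v0 s) i.
Proof. by rewrite /coord walk_toggle ?enum_uniq ?mem_enum. Qed.

Lemma coord_surj v0 v : exists s, coord v0 s = v.
Proof.
apply: (nbr_ind (P := fun v => exists s, coord v0 s = v) _ _ v) => [|_ i [s <-]].
  by exists set0; rewrite coord_set0.
by exists (toggle s i); rewrite coord_toggle.
Qed.

Lemma coord_bij v0 : #|V| = (2 ^ N)%N -> bijective (coord v0).
Proof.
move=> cardV; have card_sets : #|{set 'I_N}| = #|V|.
  by rewrite cardV -cardsT -powersetT card_powerset cardsT card_ord.
apply: inj_card_bij; last by rewrite card_sets.
have /image_injP inj : #|image (coord v0) {set 'I_N}| == #|{set 'I_N}|.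
  rewrite card_sets; apply/eqP/eq_card => v.
  by have [s <-] := coord_surj v0 v; rewrite image_f.
by move=> s t; apply: inj.
Qed.

End Adinkra.

Section NbrMorphism.
Variables (N : nat) (V1 V2 : finType) (A1 : adinkra_data N V1) (A2 : adinkra_data N V2).
Hypotheses (adinkra1 : is_adinkra A1) (adinkra2 : is_adinkra A2).
Variable f : V1 -> V2.
Hypotheses (f_bij : bijective f) (f_nbr : forall u i, f (nbr A1 u i) = nbr A2 (f u) i).

Lemma adj_nbr_morph u v : adj A2 (f u) (f v) = adj A1 u v.
Proof.
rewrite (adj_nbrE adinkra1) (adj_nbrE adinkra2).
by apply: eq_existsb => i; rewrite -f_nbr (bij_eq f_bij).
Qed.

Lemma col_nbr_morph u v :
  adj A1 u v -> Defs.col A2 (f u) (f v) = Defs.col A1 u v.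
Proof.
move=> uv; have -> : f v = nbr A2 (f u) (Defs.col A1 u v).
  by rewrite -f_nbr -(nbr_eq adinkra1).
exact: col_nbr.
Qed.

Lemma boson_nbr_morph u0 : boson A2 (f u0) = boson A1 u0 ->
  forall u, boson A2 (f u) = boson A1 u.
Proof.
move=> b0; apply: (nbr_ind adinkra1 b0) => u i bu.
by rewrite f_nbr !boson_nbr // bu.
Qed.

Lemma switching_nbr_morph (v1 : V1) : #|V1| = (2 ^ N)%N ->
  exists S : {set V1}, forall u v, adj A1 u v ->
    dashed A2 (f u) (f v) = switched_dashed A1 S u v.
Proof.
move=> card1; have [c' cK c'K] := coord_bij adinkra1 v1 card1.
pose c := coord A1 v1.
pose e s i := dash A1 (c s) i (+) dash A2 (f (c s)) i.
have e_toggle s i : e (toggle s i) i = e s i.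
  by rewrite /e /c coord_toggle // f_nbr !dash_nbr.
have e_square s i j : i != j -> e s i (+) e (toggle s i) j = e s j (+) e (toggle s j) i.
  move=> ij; rewrite /e /c !coord_toggle // !f_nbr.
  move: (dash_square adinkra1 (c s) ij) (dash_square adinkra2 (f (c s)) ij).
  set a1 := dash A1 _ i; set b1 := dash A1 _ j; set c1 := dash A1 _ i; set d1 := dash A1 _ j.
  set a2 := dash A2 _ i; set b2 := dash A2 _ j; set c2 := dash A2 _ i; set d2 := dash A2 _ j.
  by case: a1; case: b1; case: c1; case: d1; case: a2; case: b2; case: c2; case: d2.
have [g gE] := closed_cochain_exact e_toggle e_square.
exists [set u | g (c' u)] => u v uv; rewrite /switched_dashed !inE.
rewrite (nbr_eq adinkra1 uv); move: (Defs.col A1 u v) => i.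
have [s ->] : exists s, u = c s by exists (c' u); rewrite /c c'K.
rewrite /c -coord_toggle // !cK gE /e !coord_toggle // f_nbr /dash.
set d1 := dashed A1 _ _; set d2 := dashed A2 _ _.
by case: d1; case: d2; case: (g s).
Qed.

Lemma nbr_morph_iso (v1 : V1) :
  #|V1| = (2 ^ N)%N -> boson A2 (f v1) = boson A1 v1 ->
  adinkra_iso_up_to_switching A1 A2.
Proof.
move=> card1 b1; exists f; split => //.
- exact: adj_nbr_morph.
- exact: col_nbr_morph.
- exact: boson_nbr_morph b1.
- exact: switching_nbr_morph card1.
Qed.

End NbrMorphism.

Lemma cube_nbr_morph (N : nat) (V1 V2 : finType)
  (A1 : adinkra_data N V1) (A2 : adinkra_data N V2) (v1 : V1) (v2 : V2) :
  is_cube_adinkra A1 -> is_cube_adinkra A2 ->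
  exists f : V1 -> V2,
    [/\ bijective f, f v1 = v2 & forall u i, f (nbr A1 u i) = nbr A2 (f u) i].
Proof.
move=> [adinkra1 card1] [adinkra2 card2].
have [c' cK c'K] := coord_bij adinkra1 v1 card1.
exists (coord A2 v2 \o c'); split => /=.
- by apply: bij_comp (coord_bij adinkra2 v2 card2) _; exists (coord A1 v1).
- by rewrite -{1}(coord_set0 A1 v1) cK coord_set0.
- move=> u i; have [s ->] : exists s, u = coord A1 v1 s by exists (c' u); rewrite c'K.
  by rewrite -(coord_toggle adinkra1) !cK (coord_toggle adinkra2).
Qed.

Theorem mainTheorem2 (N : nat) (V1 V2 : finType)
  (A1 : adinkra_data N V1) (A2 : adinkra_data N V2) :
  (1 <= N)%N -> is_cube_adinkra A1 -> is_cube_adinkra A2 ->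
  adinkra_iso_up_to_switching A1 A2.
Proof.
move=> N_gt0 cube1 cube2; have [adinkra1 card1] := cube1; have [adinkra2 card2] := cube2.
have /card_gt0P[v1 _] : (0 < #|V1|)%N by rewrite card1 expn_gt0.
have /card_gt0P[w _] : (0 < #|V2|)%N by rewrite card2 expn_gt0.
pose v2 := if boson A2 w == boson A1 v1 then w else nbr A2 w (Ordinal N_gt0).
have b2 : boson A2 v2 = boson A1 v1.
  rewrite /v2; case: eqP => // /eqP; rewrite (boson_nbr adinkra2).
  by case: (boson A2 w); case: (boson A1 v1).
have [f [f_bij f_v1 f_nbr]] := cube_nbr_morph v1 v2 cube1 cube2.
by apply: (nbr_morph_iso adinkra1 adinkra2 f_bij f_nbr (v1 := v1) card1); rewrite f_v1.
Qed.
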